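(* Let $A_1,\dots,A_n,B_1,\dots,B_n$ be positive definite matrices with $mI\le A_i,B_i\le MI$ for all $i$ and some scalars $0<m<M$, and put $h=M/m$. Then for all $p\in(-\infty,1]\setminus\{0\}$, \[K(h,p)^{1/p}\Big(\mathrm{Tr}\Big[\Big(\sum_{i=1}^nA_i^p\Big)^{1/p}\Big]+\mathrm{Tr}\Big[\Big(\sum_{i=1}^nB_i^p\Big)^{1/p}\Big]\Big)\le\mathrm{Tr}\Big[\Big(\sum_{i=1}^n(A_i+B_i)^p\Big)^{1/p}\Big]\le K(h,p)^{-1/p}\Big(\mathrm{Tr}\Big[\Big(\sum_{i=1}^nA_i^p\Big)^{1/p}\Big]+\mathrm{Tr}\Big[\Big(\sum_{i=1}^nB_i^p\Big)^{1/p}\Big]\Big),\] and for all $p\ge1$, \[K(h,p)^{-1/p}\Big(\mathrm{Tr}\Big[\Big(\sum_{i=1}^nA_i^p\Big)^{1/p}\Big]+\mathrm{Tr}\Big[\Big(\sum_{i=1}^nB_i^p\Big)^{1/p}\Big]\Big)\le\mathrm{Tr}\Big[\Big(\sum_{i=1}^n(A_i+B_i)^p\Big)^{1/p}\Big]\le K(h,p)^{1/p}\Big(\mathrm{Tr}\Big[\Big(\sum_{i=1}^nA_i^p\Big)^{1/p}\Big]+\mathrm{Tr}\Big[\Big(\sum_{i=1}^nB_i^p\Big)^{1/p}\Big]\Big).\]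
   Context: $\mathrm{Tr}$ is the trace, $\le$ the Löwner order. Generalized Kantorovich constant: $K(h,p)=\frac{h^p-h}{(p-1)(h-1)}\Big(\frac{p-1}{p}\frac{h^p-1}{h^p-h}\Big)^p$ (with $K(h,1)=1$ by continuity). *)

From HB Require Import structures.
From mathcomp Require Import all_boot all_order all_algebra.
From mathcomp Require Import all_classical all_reals all_analysis.
From mathcomp Require Import complex.
Set Implicit Arguments. Unset Strict Implicit. Unset Printing Implicit Defensive.
Import Order.TTheory GRing.Theory Num.Theory Num.Def.
Local Open Scope ring_scope.
Local Open Scope sesquilinear_scope.

Definition ofR (R : realType) (x : R) : R[i] := Complex x 0.

Definition hermitian (R : realType) (d : nat) (A : 'M[R[i]]_d) : Prop :=
  A \is hermsymmx.

Definition psdmx (R : realType) (d : nat) (A : 'M[R[i]]_d) : Prop :=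
  hermitian A /\ forall v : 'rV[R[i]]_d, 0 <= (v *m A *m (v ^t conjC)) 0 0.

Definition pdmx (R : realType) (d : nat) (A : 'M[R[i]]_d) : Prop :=
  hermitian A /\
  forall v : 'rV[R[i]]_d, v != 0 -> 0 < (v *m A *m (v ^t conjC)) 0 0.

Definition loewner_le (R : realType) (d : nat) (A B : 'M[R[i]]_d) : Prop :=
  psdmx (B - A).

(* Real power A^p of a (positive definite) Hermitian matrix, via the
   functional calculus: with the library's spectral decomposition
   A = U^-1 diag(lambda) U (U unitary), A^p := U^-1 diag(lambda^p) U. *)
Definition mpow (R : realType) (d : nat) (A : 'M[R[i]]_d) (p : R) : 'M[R[i]]_d :=
  let U := spectralmx A in
  let lam := spectral_diag A in
  invmx U *m diag_mx (\row_j ofR (powR (complex.Re (lam 0 j)) p)) *m U.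

Definition Kant (R : realType) (h p : R) : R :=
  if p == 1 then 1 else
  (powR h p - h) / ((p - 1) * (h - 1)) *
  powR ((p - 1) / p * ((powR h p - 1) / (powR h p - h))) p.

Definition trpow (R : realType) (d n : nat) (A : 'I_n -> 'M[R[i]]_d) (p : R) : R[i] :=
  \tr (mpow (\sum_(i < n) mpow (A i) p) p^-1).

From HB Require Import structures.
From mathcomp Require Import all_boot all_order all_algebra.
From mathcomp Require Import all_classical all_reals all_analysis.
From mathcomp Require Import complex ring lra.
Import Order.TTheory GRing.Theory Num.Theory.
Set Implicit Arguments. Unset Strict Implicit.
Local Open Scope ring_scope.
Local Open Scope sesquilinear_scope.

(* Write Y = sum_i A_i^p in its eigenbasis (u_k) and A_i in its eigenbasis
   (v_il) with eigenvalues lam_il in [m, M].  Then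
     Tr[Y^(1/p)] = sum_k (sum_i sum_l |<u_k, v_il>|^2 lam_il^p)^(1/p),
   and for each i the overlaps |<u_k, v_il>|^2 form a doubly stochastic matrix.
   Dividing them by n, each summand is n^(1/p) times a weighted power mean of
   numbers in [m, M].  Jensen's inequality and its reverse with constant K(h,p)
   (the ratio of the chord of t^p over [m, M] to the parallel tangent) bound it
   by constant multiples of the weighted arithmetic mean, and summing over k
   these arithmetic means add up to n^(1/p - 1) sum_i Tr A_i.  The latter is
   additive in the family, and the eigenvalues of A_i + B_i lie in [2m, 2M]
   with the same ratio h, so comparing the estimates for A, B and A + B gives
   both inequalities. *)

Section PowerInequalities.
Variable R : realType.
Implicit Types a b h p q r t x y : R.

Lemma bernoulli_powR_ge1 p r : 1 <= p -> 0 < r -> 1 + p * (r - 1) <= r `^ p.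
Proof.
move=> p1 r0; have [->|p_neq1] := eqVneq p 1; first by rewrite powRr1 ?(ltW r0) //; lra.
have p_gt1 : 1 < p by rewrite lt_neqAle eq_sym p_neq1.
have p0 : 0 < p by lra.
have q0 : 0 < p / (p - 1) by apply: divr_gt0; lra.
have conj : p^-1 + (p / (p - 1))^-1 = 1 by rewrite invf_div; field; rewrite gt_eqF.
have := conjugate_powR (ltW r0) ler01 p0 q0 conj.
rewrite powR1 mulr1 invf_div.
have -> : r `^ p / p + 1 * ((p - 1) / p) = (r `^ p + (p - 1)) / p.
  by field; rewrite gt_eqF.
by rewrite ler_pdivlMr // => ?; nra.
Qed.

Lemma bernoulli_powR_lt0 p r : p < 0 -> 0 < r -> 1 + p * (r - 1) <= r `^ p.
Proof.
move=> p0 r0.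
have P0 : 0 < 1 - p by lra.
have Q0 : 0 < (1 - p) / - p by apply: divr_gt0; lra.
have [P_neq0 p_neq0] := (lt0r_neq0 P0, ltr0_neq0 p0).
have conj : (1 - p)^-1 + ((1 - p) / - p)^-1 = 1.
  by rewrite invf_div; field; rewrite ?P_neq0 ?oppr_eq0 ?p_neq0.
(* Young's inequality for r^(p/(1-p)) * r^(-p/(1-p)) = 1 *)
have := conjugate_powR (powR_ge0 r (p / (1 - p))) (powR_ge0 r (- p / (1 - p))) P0 Q0 conj.
rewrite -powRD; last by apply/implyP => _; rewrite gt_eqF.
rewrite -!powRrM.
have -> : p / (1 - p) + - p / (1 - p) = 0 by field.
have -> : p / (1 - p) * (1 - p) = p by field.
have -> : - p / (1 - p) * ((1 - p) / - p) = 1.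
  by field; rewrite ?P_neq0 ?oppr_eq0 ?p_neq0.
rewrite powRr0 powRr1 ?(ltW r0) // invf_div.
have -> : r `^ p / (1 - p) + r * (- p / (1 - p)) = (r `^ p - p * r) / (1 - p).
  by field.
by rewrite ler_pdivlMr // => ?; nra.
Qed.

Lemma bernoulli_powR_ccv p r : 0 < p < 1 -> 0 <= r -> r `^ p <= 1 + p * (r - 1).
Proof.
move=> /andP[p0 p1] r0.
have P0 : 0 < p^-1 by rewrite invr_gt0.
have Q0 : 0 < (1 - p)^-1 by rewrite invr_gt0; lra.
have := conjugate_powR (powR_ge0 r p) ler01 P0 Q0.
rewrite !invrK -powRrM mulfV ?gt_eqF // powRr1 // powR1 mulr1 => /(_ ltac:(lra)).
by move=> /le_trans; apply; lra.
Qed.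

Definition cvx_exponent p := (p < 0) || (1 <= p).

Lemma bernoulli_powR_cvx p r : cvx_exponent p -> 0 < r -> 1 + p * (r - 1) <= r `^ p.
Proof. by case/orP => [/bernoulli_powR_lt0|/bernoulli_powR_ge1]; apply. Qed.

Definition tangent p t x := t `^ p + p * t `^ p / t * (x - t).

Lemma tangentE p t x : 0 < t -> tangent p t x = t `^ p * (1 + p * (x / t - 1)).
Proof. by move=> t0; rewrite /tangent; field; rewrite gt_eqF. Qed.

Lemma powR_div_scale p t x : 0 < t -> 0 <= x -> x `^ p = t `^ p * (x / t) `^ p.
Proof.
move=> t0 x0; rewrite -powRM ?divr_ge0 ?(ltW t0) //.
by rewrite mulrCA mulfV ?mulr1 // gt_eqF.
Qed.

Lemma tangent_le_powR p t x : cvx_exponent p -> 0 < t -> 0 < x ->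
  tangent p t x <= x `^ p.
Proof.
move=> cp t0 x0; rewrite tangentE // (powR_div_scale p t0 (ltW x0)).
by rewrite ler_wpM2l ?powR_ge0 // bernoulli_powR_cvx ?divr_gt0.
Qed.

Lemma powR_le_tangent p t x : 0 < p < 1 -> 0 < t -> 0 <= x ->
  x `^ p <= tangent p t x.
Proof.
move=> cp t0 x0; rewrite tangentE // (powR_div_scale p t0 x0).
by rewrite ler_wpM2l ?powR_ge0 // bernoulli_powR_ccv ?divr_ge0 ?(ltW t0).
Qed.

Lemma gt1_ltr_powR h p q : 1 < h -> p < q -> h `^ p < h `^ q.
Proof.
move=> h1 pq; rewrite /powR gt_eqF ?(lt_trans ltr01 h1) // ltr_expR.
by rewrite ltr_pM2r // ln_gt0.
Qed.

Lemma powR_secant_gt0 h p q : 1 < h -> p != q -> 0 < (h `^ p - h `^ q) / (p - q).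
Proof.
move=> h1; have [pq|pq|//] := ltgtP p q => _.
- by rewrite -divrNN !opprB divr_gt0 // subr_gt0 ?gt1_ltr_powR.
- by rewrite divr_gt0 // subr_gt0 ?gt1_ltr_powR.
Qed.

Lemma powR_sub_neq0 h p q : 1 < h -> p != q -> h `^ p - h `^ q != 0.
Proof.
by move=> h1 pq; apply: contraTneq (powR_secant_gt0 h1 pq) => ->; rewrite mul0r ltxx.
Qed.

Definition Kant_coef h p := (h `^ p - h) / ((p - 1) * (h - 1)).
Definition Kant_base h p := (p - 1) / p * ((h `^ p - 1) / (h `^ p - h)).

Lemma KantE h p : p != 1 -> Kant h p = Kant_coef h p * Kant_base h p `^ p.
Proof. by move=> /negPf p1; rewrite /Kant p1. Qed.

Lemma Kant1 h : Kant h 1 = 1.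
Proof. by rewrite /Kant eqxx. Qed.

Lemma Kant_coef_gt0 h p : 1 < h -> p != 1 -> 0 < Kant_coef h p.
Proof.
move=> h1 p1; have := powR_secant_gt0 h1 p1.
rewrite powRr1 ?(ltW (lt_trans ltr01 h1)) // => s1.
by rewrite /Kant_coef invfM mulrA divr_gt0 // subr_gt0.
Qed.

Lemma Kant_base_gt0 h p : 1 < h -> p != 0 -> p != 1 -> 0 < Kant_base h p.
Proof.
move=> h1 p0 p1.
have := powR_secant_gt0 h1 p0; rewrite powRr0 subr0 => s0.
have h0 := ltW (lt_trans ltr01 h1).
have := powR_secant_gt0 h1 p1; rewrite powRr1 // => s1.
have := powR_sub_neq0 h1 p1; rewrite powRr1 // => Hh.
have -> : Kant_base h p = ((h `^ p - 1) / p) / ((h `^ p - h) / (p - 1)).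
  by rewrite /Kant_base; field; rewrite Hh p0 subr_eq0 p1.
by rewrite divr_gt0.
Qed.

Lemma Kant_gt0 h p : 1 < h -> p != 0 -> 0 < Kant h p.
Proof.
move=> h1 p0; have [->|p1] := eqVneq p 1; first by rewrite Kant1.
by rewrite KantE // mulr_gt0 ?Kant_coef_gt0 // powR_gt0 ?Kant_base_gt0.
Qed.

Definition chord p a b t := ((b - t) * a `^ p + (t - a) * b `^ p) / (b - a).

Lemma chord_affine p a b t u : a != b ->
  chord p a b t = chord p a b u + (b `^ p - a `^ p) / (b - a) * (t - u).
Proof. by move=> ab; rewrite /chord; field; rewrite subr_eq0 eq_sym. Qed.

Lemma chord_powR1 a b t : 0 <= a -> 0 <= b -> a != b -> chord 1 a b t = t.
Proof. by move=> a0 b0 ab; rewrite /chord !powRr1 //; field; rewrite subr_eq0 eq_sym. Qed.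

Lemma tangent_interpolate p a b y : y != 0 ->
  y `^ p * (b - a) = (b - y) * tangent p y a + (y - a) * tangent p y b.
Proof. by move=> y0; rewrite /tangent; field. Qed.

Lemma powR_le_chord p a b y : cvx_exponent p -> 0 < a -> a < b -> a <= y <= b ->
  y `^ p <= chord p a b y.
Proof.
move=> cp a0 ab /andP[ay yb]; have y0 := lt_le_trans a0 ay.
rewrite /chord ler_pdivlMr ?subr_gt0 // tangent_interpolate ?lt0r_neq0 //.
by rewrite lerD // ler_wpM2l ?subr_ge0 // tangent_le_powR // (lt_trans a0).
Qed.

Lemma chord_le_powR p a b y : 0 < p < 1 -> 0 < a -> a < b -> a <= y <= b ->
  chord p a b y <= y `^ p.
Proof.
move=> cp a0 ab /andP[ay yb]; have y0 := lt_le_trans a0 ay.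
rewrite /chord ler_pdivrMr ?subr_gt0 // tangent_interpolate ?lt0r_neq0 //.
by rewrite lerD // ler_wpM2l ?subr_ge0 // powR_le_tangent // ltW // (lt_trans a0).
Qed.

(* The Kantorovich constant is the ratio between the chord of t^p over [a, ah]
   and the parallel tangent line of t^p, whose point of tangency is
   a / Kant_base h p. *)
Lemma chord_Kant_tangent p a h t : 0 < a -> 1 < h -> p != 0 -> p != 1 ->
  chord p a (a * h) t = Kant h p * tangent p (a / Kant_base h p) t.
Proof.
move=> a0 h1 p0 p1; have h0 := lt_trans ltr01 h1.
have u0 := Kant_base_gt0 h1 p0 p1.
have U0 : Kant_base h p `^ p != 0 by rewrite gt_eqF ?powR_gt0.
have := powR_sub_neq0 h1 p1; rewrite powRr1 ?(ltW h0) // => Hh.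
have := powR_sub_neq0 h1 p0; rewrite powRr0 => H1.
have ah : a * h - a != 0 by rewrite subr_eq0 gt_eqF // ltr_pMr.
rewrite KantE // /tangent /chord powRM ?(ltW a0) ?(ltW h0) //.
rewrite powRM ?(ltW a0) ?invr_ge0 ?(ltW u0) //.
have -> : (Kant_base h p)^-1 `^ p = (Kant_base h p `^ p)^-1.
  by rewrite -powR_inv1 ?(ltW u0) // powRAC powR_inv1 ?powR_ge0.
move: U0; rewrite /Kant_coef /Kant_base => U0.
by field; rewrite Hh H1 p0 U0 ah (lt0r_neq0 a0) !subr_eq0 p1 (gt_eqF h1).
Qed.

Lemma cvx_exponent_neq0 p : cvx_exponent p -> p != 0.
Proof. by case/orP => [/ltr0_neq0|/(lt_le_trans ltr01)/lt0r_neq0]. Qed.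

Lemma div_gt1 a b : 0 < a -> a < b -> 1 < b / a.
Proof. by move=> a0 ab; rewrite ltr_pdivlMr // mul1r. Qed.

Lemma chord_le_Kant_powR p a b t : cvx_exponent p -> 0 < a -> a < b -> 0 < t ->
  chord p a b t <= Kant (b / a) p * t `^ p.
Proof.
move=> cp a0 ab t0; have [p0 h1] := (cvx_exponent_neq0 cp, div_gt1 a0 ab).
have [->|p1] := eqVneq p 1.
  rewrite Kant1 mul1r chord_powR1 ?powRr1 ?(ltW t0) ?(ltW a0) ?(lt_eqF ab) //.
  exact: ltW (lt_trans a0 ab).
have -> : chord p a b t = chord p a (a * (b / a)) t by rewrite mulrC mulfVK ?gt_eqF.
rewrite chord_Kant_tangent //; apply: ler_wpM2l; first exact: ltW (Kant_gt0 h1 p0).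
exact: tangent_le_powR cp (divr_gt0 a0 (Kant_base_gt0 h1 p0 p1)) t0.
Qed.

Lemma Kant_powR_le_chord p a b t : 0 < p < 1 -> 0 < a -> a < b -> 0 < t ->
  Kant (b / a) p * t `^ p <= chord p a b t.
Proof.
move=> /[dup] cp /andP[/lt0r_neq0 p0 /lt_eqF/negbT p1] a0 ab t0.
have h1 := div_gt1 a0 ab.
have -> : chord p a b t = chord p a (a * (b / a)) t by rewrite mulrC mulfVK ?gt_eqF.
rewrite chord_Kant_tangent //; apply: ler_wpM2l; first exact: ltW (Kant_gt0 h1 p0).
exact: powR_le_tangent cp (divr_gt0 a0 (Kant_base_gt0 h1 p0 p1)) (ltW t0).
Qed.

Lemma ge0_ler_powR_nneg r x y : 0 <= r -> 0 <= x -> x <= y -> x `^ r <= y `^ r.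
Proof. by move=> r0 x0 xy; rewrite ge0_ler_powR // nnegrE (le_trans x0). Qed.

Lemma lt0_ger_powR r x y : r < 0 -> 0 < x -> x <= y -> y `^ r <= x `^ r.
Proof.
move=> r0 x0 xy; have y0 := lt_le_trans x0 xy.
rewrite -(opprK r) !(powRN _ (- r)) lef_pV2 ?posrE ?powR_gt0 //.
by rewrite ge0_ler_powR_nneg ?oppr_ge0 ?(ltW r0) ?(ltW x0).
Qed.

Lemma powRK p x : p != 0 -> 0 <= x -> (x `^ p) `^ p^-1 = x.
Proof. by move=> p0 x0; rewrite -powRrM mulfV // powRr1. Qed.

Lemma powRMK p k x : p != 0 -> 0 <= k -> 0 <= x ->
  (k * x `^ p) `^ p^-1 = k `^ p^-1 * x.
Proof. by move=> p0 k0 x0; rewrite powRM ?powR_ge0 // powRK. Qed.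

(* Constants comparing a power mean with the arithmetic mean: for p >= 1 Jensen
   gives the lower bound and the Kantorovich constant the upper one; for p < 1
   the roles are swapped. *)
Definition kant_lb p k := if 1 <= p then 1 else k `^ p^-1.
Definition kant_ub p k := if 1 <= p then k `^ p^-1 else 1.

Lemma kant_lb_gt0 p k : 0 < k -> 0 < kant_lb p k.
Proof. by rewrite /kant_lb; case: ifP => // _ /powR_gt0. Qed.

Lemma kant_ub_gt0 p k : 0 < k -> 0 < kant_ub p k.
Proof. by rewrite /kant_ub; case: ifP => // _ /powR_gt0. Qed.

Section WeightedMean.
Variables (J : finType) (w x : J -> R) (a b : R).
Hypothesis w_ge0 : forall j, 0 <= w j.
Hypothesis w_sum1 : \sum_j w j = 1.
Hypothesis a_gt0 : 0 < a.
Hypothesis a_lt_b : a < b.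
Hypothesis x_in : forall j, a <= x j <= b.

Local Notation mean := (\sum_j w j * x j).

Lemma point_gt0 j : 0 < x j.
Proof. by case/andP: (x_in j) => /(lt_le_trans a_gt0). Qed.

Lemma wmean_gt0 : 0 < mean.
Proof.
apply: lt_le_trans a_gt0 _; rewrite -[a]mul1r -w_sum1 mulr_suml.
by apply: ler_sum => j _; apply: ler_wpM2l => //; case/andP: (x_in j).
Qed.

Lemma wsum_affine c e t : \sum_j w j * (c + e * (x j - t)) = c + e * (mean - t).
Proof.
have -> : \sum_j w j * (c + e * (x j - t)) =
    c * \sum_j w j + e * mean - e * t * \sum_j w j.
  by rewrite !mulr_sumr -big_split -sumrB /=; apply: eq_bigr => j _; ring.
by rewrite w_sum1; ring.
Qed.

Lemma wsum_tangent p : \sum_j w j * tangent p mean (x j) = mean `^ p.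
Proof. by rewrite wsum_affine subrr mulr0 addr0. Qed.

Lemma wsum_chord p : \sum_j w j * chord p a b (x j) = chord p a b mean.
Proof.
under eq_bigr => j _ do rewrite (chord_affine p _ mean (negbT (lt_eqF a_lt_b))).
by rewrite wsum_affine subrr mulr0 addr0.
Qed.

Lemma jensen_powR_cvx p : cvx_exponent p -> mean `^ p <= \sum_j w j * x j `^ p.
Proof.
move=> cp; rewrite -wsum_tangent; apply: ler_sum => j _; apply: ler_wpM2l => //.
exact: tangent_le_powR cp wmean_gt0 (point_gt0 j).
Qed.

Lemma jensen_powR_ccv p : 0 < p < 1 -> \sum_j w j * x j `^ p <= mean `^ p.
Proof.
move=> cp; rewrite -wsum_tangent; apply: ler_sum => j _; apply: ler_wpM2l => //.
exact: powR_le_tangent cp wmean_gt0 (ltW (point_gt0 j)).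
Qed.

Lemma reverse_jensen_powR_cvx p : cvx_exponent p ->
  \sum_j w j * x j `^ p <= Kant (b / a) p * mean `^ p.
Proof.
move=> cp; apply: (@le_trans _ _ (\sum_j w j * chord p a b (x j))).
  by apply: ler_sum => j _; rewrite ler_wpM2l ?powR_le_chord.
by rewrite wsum_chord chord_le_Kant_powR ?wmean_gt0.
Qed.

Lemma reverse_jensen_powR_ccv p : 0 < p < 1 ->
  Kant (b / a) p * mean `^ p <= \sum_j w j * x j `^ p.
Proof.
move=> cp; apply: (@le_trans _ _ (\sum_j w j * chord p a b (x j))); last first.
  by apply: ler_sum => j _; rewrite ler_wpM2l ?chord_le_powR.
by rewrite wsum_chord Kant_powR_le_chord ?wmean_gt0.
Qed.

Lemma power_mean_bounds p : p != 0 ->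
  kant_lb p (Kant (b / a) p) * mean <= (\sum_j w j * x j `^ p) `^ p^-1
    <= kant_ub p (Kant (b / a) p) * mean.
Proof.
move=> p0; have s0 := ltW wmean_gt0.
set K := Kant (b / a) p; set E := \sum_j w j * x j `^ p.
have K0 : 0 <= K := ltW (Kant_gt0 (div_gt1 a_gt0 a_lt_b) p0).
have E0 : 0 <= E by apply: sumr_ge0 => j _; rewrite mulr_ge0 ?powR_ge0.
rewrite /kant_lb /kant_ub; case: ifPn => [p1|]; last rewrite -ltNge => p1.
  have cp : cvx_exponent p by rewrite /cvx_exponent p1 orbT.
  have pV0 : 0 <= p^-1 by rewrite invr_ge0 (le_trans ler01).
  rewrite mul1r -(powRMK p0 K0 s0) -{1}(powRK p0 s0).
  rewrite !ge0_ler_powR_nneg ?mulr_ge0 ?powR_ge0 //.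
    exact: jensen_powR_cvx.
  exact: reverse_jensen_powR_cvx.
rewrite mul1r -(powRMK p0 K0 s0) -{2}(powRK p0 s0).
have [pn|pp] := ltP p 0.
  have cp : cvx_exponent p by rewrite /cvx_exponent pn.
  have Ep : 0 < E := lt_le_trans (powR_gt0 p wmean_gt0) (jensen_powR_cvx cp).
  rewrite !lt0_ger_powR ?invr_lt0 ?powR_gt0 ?wmean_gt0 //.
    exact: reverse_jensen_powR_cvx.
  exact: jensen_powR_cvx.
have cp : 0 < p < 1 by rewrite lt_neqAle eq_sym p0 pp.
have pV0 : 0 <= p^-1 by rewrite invr_ge0.
rewrite !ge0_ler_powR_nneg ?mulr_ge0 ?powR_ge0 //.
  exact: reverse_jensen_powR_ccv.
exact: jensen_powR_ccv.
Qed.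

End WeightedMean.

Section DoublyStochastic.
Variables (I J : finType) (lam : I -> J -> R) (wt : J -> I -> J -> R) (a b p : R).
Hypothesis a_gt0 : 0 < a.
Hypothesis a_lt_b : a < b.
Hypothesis p_neq0 : p != 0.
Hypothesis lam_in : forall i j, a <= lam i j <= b.
Hypothesis wt_ge0 : forall k i j, 0 <= wt k i j.
Hypothesis wt_row : forall k i, \sum_j wt k i j = 1.
Hypothesis wt_col : forall i j, \sum_k wt k i j = 1.

Local Notation N := (#|I|%:R : R).
Local Notation c := (N `^ p^-1 / N).

Lemma doubly_stochastic_powR_bounds :
  kant_lb p (Kant (b / a) p) * (c * \sum_i \sum_j lam i j)
    <= \sum_k (\sum_i \sum_j wt k i j * lam i j `^ p) `^ p^-1
    <= kant_ub p (Kant (b / a) p) * (c * \sum_i \sum_j lam i j).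
Proof.
have [I0|I_gt0] := posnP #|I|.
  have sumI0 F : \sum_(i : I) F i = 0 :> R.
    by rewrite big1 // => i _; have := fintype0 i; rewrite I0.
  rewrite I0 invr0 mulr0 mul0r mulr0 big1 => [|k _]; first by rewrite mulr0 lexx.
  by rewrite sumI0 powR0 ?invr_eq0.
have N0 : 0 < N by rewrite ltr0n.
pose w k (ij : I * J) := wt k ij.1 ij.2 / N.
pose x (ij : I * J) := lam ij.1 ij.2.
have w_ge0 k ij : 0 <= w k ij by rewrite divr_ge0 ?(ltW N0).
have w_sum1 k : \sum_ij w k ij = 1.
  rewrite -(pair_big xpredT xpredT (fun i j => wt k i j / N)) /=.
  under eq_bigr => i _ do rewrite -mulr_suml wt_row mul1r.
  by rewrite sumr_const -[#|xpredT|]/#|I| -[_ *+ #|I|]mulr_natl mulfV ?gt_eqF.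
have x_in ij : a <= x ij <= b by exact: lam_in.
have termE k : (\sum_i \sum_j wt k i j * lam i j `^ p) `^ p^-1 =
    N `^ p^-1 * (\sum_ij w k ij * x ij `^ p) `^ p^-1.
  have E0 : 0 <= \sum_ij w k ij * x ij `^ p.
    by apply: sumr_ge0 => ij _; rewrite mulr_ge0 ?powR_ge0.
  rewrite -powRM ?(ltW N0) //.
  rewrite (pair_big xpredT xpredT (fun i j => wt k i j * lam i j `^ p)) mulr_sumr.
  by congr (_ `^ _); apply: eq_bigr => ij _; rewrite /w /x; field; rewrite gt_eqF.
have meanE : c * \sum_i \sum_j lam i j = \sum_k N `^ p^-1 * \sum_ij w k ij * x ij.
  rewrite -mulr_sumr -mulrA; congr (_ * _).
  rewrite [RHS]exchange_big (pair_big xpredT xpredT lam) mulr_sumr /=.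
  by apply: eq_bigr => ij _; rewrite /w /x -!mulr_suml wt_col mul1r mulrC.
rewrite (eq_bigr _ (fun k _ => termE k)) meanE !mulr_sumr.
apply/andP; split; apply: ler_sum => k _; rewrite mulrCA ler_wpM2l ?powR_ge0 //;
  by have /andP[] := power_mean_bounds (w_ge0 k) (w_sum1 k) a_gt0 a_lt_b x_in p_neq0.
Qed.

End DoublyStochastic.

Lemma ratio_bounds_add lo hi x1 x2 y1 y2 z : 0 < lo -> 0 < hi ->
  lo * x1 <= y1 <= hi * x1 -> lo * x2 <= y2 <= hi * x2 ->
  lo * (x1 + x2) <= z <= hi * (x1 + x2) ->
  lo / hi * (y1 + y2) <= z <= hi / lo * (y1 + y2).
Proof.
move=> lo0 hi0 /andP[l1 u1] /andP[l2 u2] /andP[l u]; apply/andP; split.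
  by apply: le_trans l; rewrite -mulrA ler_pM2l // ler_pdivrMl // mulrDr lerD.
by apply: le_trans u _; rewrite -mulrA ler_pM2l // ler_pdivlMl // mulrDr lerD.
Qed.

Lemma kant_bound_ratios p k : (p = 1 -> k = 1) ->
  (p <= 1 -> kant_lb p k / kant_ub p k = k `^ p^-1 /\
             kant_ub p k / kant_lb p k = k `^ (- p^-1)) /\
  (1 <= p -> kant_lb p k / kant_ub p k = k `^ (- p^-1) /\
             kant_ub p k / kant_lb p k = k `^ p^-1).
Proof.
move=> k1; rewrite powRN /kant_lb /kant_ub; case: ifPn => p1.
  split=> [p_le1|_]; last by rewrite div1r divr1.
  have -> : k = 1 by apply/k1/eqP; rewrite eq_le p_le1 p1.
  by rewrite powR1 divr1 invr1.
by split=> [_|//]; rewrite divr1 div1r.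
Qed.
End PowerInequalities.

Section Spectral.
Variables (R : realType) (d : nat).
Local Notation C := R[i].
Implicit Types (X Y : 'M[C]_d) (a b q : R).

Lemma ofRD (x y : R) : ofR (x + y) = ofR x + ofR y.
Proof. exact: (rmorphD (real_complex R)). Qed.

Lemma ofRM (x y : R) : ofR (x * y) = ofR x * ofR y.
Proof. exact: (rmorphM (real_complex R)). Qed.

Lemma ofR_sum (I : finType) (F : I -> R) : ofR (\sum_i F i) = \sum_i ofR (F i).
Proof. exact: (rmorph_sum (real_complex R)). Qed.

Lemma ler_ofR (x y : R) : (ofR x <= ofR y) = (x <= y).
Proof. exact: lecR. Qed.

Lemma hermsymmxE X : (X \is hermsymmx) = (X == X^t*).
Proof. by rewrite is_hermitianmxE expr0 scale1r. Qed.

Lemma hermsymmxD X Y : X \is hermsymmx -> Y \is hermsymmx -> X + Y \is hermsymmx.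
Proof.
by rewrite !hermsymmxE => /eqP hX /eqP hY; rewrite linearD /= map_mxD -hX -hY.
Qed.

Lemma hermsymmx_sum (I : finType) (X : I -> 'M[C]_d) :
  (forall i, X i \is hermsymmx) -> \sum_i X i \is hermsymmx.
Proof.
move=> hX; apply: (big_ind (fun Y => Y \is hermsymmx)) => //; last exact: hermsymmxD.
by rewrite hermsymmxE trmx0 map_mx0.
Qed.

Lemma hermsymmx_mpow X q : mpow X q \is hermsymmx.
Proof.
rewrite hermsymmxE /mpow invmx_unitary ?spectral_unitarymx //.
rewrite !trmx_mul !map_mxM trmxCK tr_diag_mx map_diag_mx mulmxA.
apply/eqP; congr (_ *m diag_mx _ *m _); apply/rowP => j; rewrite !mxE.
exact/esym/conjc_real.
Qed.

Definition ev X j := complex.Re (spectral_diag X 0 j).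

Lemma spectral_conj X : X \is hermsymmx ->
  spectralmx X *m X *m (spectralmx X)^t* = diag_mx (spectral_diag X).
Proof.
have U := spectral_unitarymx X.
move=> /hermitian_normalmx/orthomx_spectralP {2}->; rewrite invmx_unitary //.
by rewrite !mulmxA (unitarymxP U) mul1mx mulmxtVK.
Qed.

Lemma spectral_diagE X k : X \is hermsymmx ->
  spectral_diag X 0 k = (spectralmx X *m X *m (spectralmx X)^t*) k k.
Proof. by move=> hX; rewrite spectral_conj // mxE eqxx mulr1n. Qed.

Lemma tr_mpow X q : \tr (mpow X q) = \sum_j ofR (ev X j `^ q).
Proof.
rewrite /mpow mxtrace_mulC mulmxA mulmxV ?spectral_unit // mul1mx mxtrace_diag.
by apply: eq_bigr => j _; rewrite mxE.
Qed.

Lemma Re_mxtrace X : X \is hermsymmx -> complex.Re (\tr X) = \sum_j ev X j.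
Proof.
move=> /hermitian_normalmx/orthomx_spectralP {1}->.
rewrite mxtrace_mulC mulmxA mulmxV ?spectral_unit // mul1mx mxtrace_diag.
by rewrite raddf_sum.
Qed.

Lemma conj_row_diag (U M : 'M[C]_d) k :
  (U *m M *m U^t*) k k = (row k U *m M *m (row k U)^t*) 0 0.
Proof.
rewrite !mxE; apply: eq_bigr => l _; rewrite !mxE; congr (_ * _).
by apply: eq_bigr => m _; rewrite !mxE.
Qed.

Lemma spectral_row_form X c j : X \is hermsymmx ->
  (row j (spectralmx X) *m (X - c%:M) *m (row j (spectralmx X))^t*) 0 0 =
  spectral_diag X 0 j - c.
Proof.
move=> hX; rewrite -conj_row_diag mulmxBr mulmxBl mul_mx_scalar -scalemxAl.
rewrite (unitarymxP (spectral_unitarymx X)) spectral_conj //.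
by rewrite !mxE eqxx mulr1n mulr1.
Qed.

Lemma loewner_le_ev X a : X \is hermsymmx -> loewner_le (ofR a)%:M X ->
  forall j, a <= ev X j.
Proof.
move=> hX [_ psd] j; have := psd (row j (spectralmx X)).
by rewrite spectral_row_form // lecE => /andP[_]; rewrite raddfB subr_ge0.
Qed.

Lemma ev_le_loewner X b : X \is hermsymmx -> loewner_le X (ofR b)%:M ->
  forall j, ev X j <= b.
Proof.
move=> hX [_ psd] j; have := psd (row j (spectralmx X)).
rewrite -opprB mulmxN mulNmx mxE spectral_row_form // oppr_ge0 lecE.
by move=> /andP[_]; rewrite raddfB subr_le0.
Qed.

Lemma loewner_leD X1 X2 Y1 Y2 :
  loewner_le X1 Y1 -> loewner_le X2 Y2 -> loewner_le (X1 + X2) (Y1 + Y2).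
Proof.
move=> [h1 psd1] [h2 psd2]; rewrite /loewner_le opprD addrACA.
split=> [|v]; first exact: hermsymmxD.
by rewrite mulmxDr mulmxDl mxE addr_ge0.
Qed.

Lemma scalar_ofRD a b : (ofR (a + b))%:M = (ofR a)%:M + (ofR b)%:M :> 'M[C]_d.
Proof. by rewrite ofRD raddfD. Qed.

Lemma loewner_ev_bounds X a b : X \is hermsymmx ->
  loewner_le (ofR a)%:M X /\ loewner_le X (ofR b)%:M -> forall j, a <= ev X j <= b.
Proof. by move=> hX [la lb] j; rewrite loewner_le_ev // ev_le_loewner. Qed.

Definition spectral_change Y X := spectralmx Y *m (spectralmx X)^t*.

Definition overlap Y X k l :=
  complex.Re (spectral_change Y X k l * (spectral_change Y X k l)^*).

Lemma spectral_change_unitary Y X : spectral_change Y X \is unitarymx.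
Proof. by rewrite mul_unitarymx ?trmxC_unitary ?spectral_unitarymx. Qed.

Lemma overlap_ge0 Y X k l : 0 <= overlap Y X k l.
Proof. by have := mul_conjC_ge0 (spectral_change Y X k l); rewrite lecE => /andP[]. Qed.

Lemma overlap_row Y X k : \sum_l overlap Y X k l = 1.
Proof.
have /unitarymxP/matrixP/(_ k k) := spectral_change_unitary Y X.
rewrite !mxE eqxx mulr1n => e.
rewrite /overlap -raddf_sum -[RHS]/(complex.Re (1 : C)) -e.
by congr complex.Re; apply: eq_bigr => l _; rewrite !mxE.
Qed.

Lemma overlap_col Y X l : \sum_k overlap Y X k l = 1.
Proof.
have /unitarymxP/matrixP/(_ l l) : (spectral_change Y X)^t* \is unitarymx.
  by rewrite trmxC_unitary spectral_change_unitary.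
rewrite trmxCK !mxE eqxx mulr1n => e.
rewrite /overlap -raddf_sum -[RHS]/(complex.Re (1 : C)) -e.
by congr complex.Re; apply: eq_bigr => k _; rewrite !mxE mulrC.
Qed.

Lemma Re_mulr_ofR (z : C) (x : R) : complex.Re (z * ofR x) = complex.Re z * x.
Proof. by case: z => u v /=; ring. Qed.

Lemma Re_conj_diag (W : 'M[C]_d) (e : 'I_d -> R) k :
  complex.Re ((W *m diag_mx (\row_j ofR (e j)) *m W^t*) k k) =
  \sum_l complex.Re (W k l * (W k l)^*) * e l.
Proof.
rewrite mxE raddf_sum; apply: eq_bigr => l _.
by rewrite mul_mx_diag !mxE mulrAC; apply: Re_mulr_ofR.
Qed.

Lemma Re_mpow_conj Y X q k :
  complex.Re ((spectralmx Y *m mpow X q *m (spectralmx Y)^t*) k k) =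
  \sum_l overlap Y X k l * ev X l `^ q.
Proof.
have -> : spectralmx Y *m mpow X q *m (spectralmx Y)^t* =
    spectral_change Y X *m diag_mx (\row_j ofR (ev X j `^ q)) *m
    (spectral_change Y X)^t*.
  rewrite /mpow /spectral_change invmx_unitary ?spectral_unitarymx //.
  by rewrite trmx_mul map_mxM trmxCK !mulmxA.
exact: Re_conj_diag.
Qed.

Lemma ev_sum_mpow n (X : 'I_n -> 'M[C]_d) q k :
  ev (\sum_i mpow (X i) q) k =
  \sum_i \sum_l overlap (\sum_i mpow (X i) q) (X i) k l * ev (X i) l `^ q.
Proof.
set Y := \sum_i mpow (X i) q.
have hY : Y \is hermsymmx by apply: hermsymmx_sum => i; apply: hermsymmx_mpow.
rewrite /ev spectral_diagE // {2}/Y mulmx_sumr mulmx_suml summxE raddf_sum /=.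
by apply: eq_bigr => i _; rewrite Re_mpow_conj.
Qed.

Lemma trpowE n (X : 'I_n -> 'M[C]_d) p :
  trpow X p = ofR (\sum_k ev (\sum_i mpow (X i) p) k `^ p^-1).
Proof. by rewrite /trpow tr_mpow ofR_sum. Qed.

Lemma trpow_bounds n (X : 'I_n -> 'M[C]_d) a b p : 0 < a -> a < b -> p != 0 ->
  (forall i, X i \is hermsymmx) -> (forall i j, a <= ev (X i) j <= b) ->
  kant_lb p (Kant (b / a) p) * (n%:R `^ p^-1 / n%:R * \sum_i \sum_j ev (X i) j)
    <= \sum_k ev (\sum_i mpow (X i) p) k `^ p^-1
    <= kant_ub p (Kant (b / a) p) * (n%:R `^ p^-1 / n%:R * \sum_i \sum_j ev (X i) j).
Proof.
move=> a0 ab p0 hX evX.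
under [X in _ <= X <= _]eq_bigr => k _ do rewrite ev_sum_mpow.
have := doubly_stochastic_powR_bounds
  (wt := fun k i l => overlap (\sum_i mpow (X i) p) (X i) k l) a0 ab p0 evX
  (fun k i l => overlap_ge0 _ _ k l) (fun k i => overlap_row _ _ k)
  (fun i l => overlap_col _ _ l).
by rewrite card_ord.
Qed.

Lemma sum_evD n (A B : 'I_n -> 'M[C]_d) :
  (forall i, A i \is hermsymmx) -> (forall i, B i \is hermsymmx) ->
  \sum_i \sum_j ev (A i + B i) j = \sum_i \sum_j ev (A i) j + \sum_i \sum_j ev (B i) j.
Proof.
move=> hA hB; rewrite -big_split; apply: eq_bigr => i _ /=.
by rewrite -!Re_mxtrace ?hermsymmxD // mxtraceD raddfD.
Qed.

Lemma trpow_add_bounds n (A B : 'I_n -> 'M[C]_d) a b p :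
  0 < a -> a < b -> p != 0 ->
  (forall i, A i \is hermsymmx) -> (forall i, B i \is hermsymmx) ->
  (forall i, loewner_le (ofR a)%:M (A i) /\ loewner_le (A i) (ofR b)%:M) ->
  (forall i, loewner_le (ofR a)%:M (B i) /\ loewner_le (B i) (ofR b)%:M) ->
  ofR (kant_lb p (Kant (b / a) p) / kant_ub p (Kant (b / a) p)) *
      (trpow A p + trpow B p) <= trpow (fun i => A i + B i) p /\
  trpow (fun i => A i + B i) p <=
    ofR (kant_ub p (Kant (b / a) p) / kant_lb p (Kant (b / a) p)) *
      (trpow A p + trpow B p).
Proof.
move=> a0 ab p0 hA hB bA bB.
have hAB i : A i + B i \is hermsymmx := hermsymmxD (hA i) (hB i).
have bAB i : loewner_le (ofR (a + a))%:M (A i + B i) /\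
             loewner_le (A i + B i) (ofR (b + b))%:M.
  by rewrite !scalar_ofRD; split; apply: loewner_leD; by [case: (bA i) | case: (bB i)].
have evA i := loewner_ev_bounds (hA i) (bA i).
have evB i := loewner_ev_bounds (hB i) (bB i).
have evAB i := loewner_ev_bounds (hAB i) (bAB i).
have boundsAB := trpow_bounds (addr_gt0 a0 a0) (ltrD ab ab) p0 hAB evAB.
have hba : (b + b) / (a + a) = b / a.
  by field; rewrite -mulr2n mulrn_eq0 /= lt0r_neq0.
rewrite hba sum_evD // mulrDr in boundsAB.
have boundsA := trpow_bounds a0 ab p0 hA evA.
have boundsB := trpow_bounds a0 ab p0 hB evB.
have K0 := Kant_gt0 (div_gt1 a0 ab) p0.
rewrite !trpowE -ofRD -!ofRM !ler_ofR.
apply/andP.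
exact: ratio_bounds_add (kant_lb_gt0 p K0) (kant_ub_gt0 p K0) boundsA boundsB boundsAB.
Qed.
End Spectral.

Theorem corollary4p9 (R : realType) (d n : nat)
  (A B : 'I_n -> 'M[R[i]]_d) (m M : R) :
  0 < m -> m < M ->
  (forall i, pdmx (A i)) -> (forall i, pdmx (B i)) ->
  (forall i, loewner_le (ofR m)%:M (A i) /\ loewner_le (A i) (ofR M)%:M) ->
  (forall i, loewner_le (ofR m)%:M (B i) /\ loewner_le (B i) (ofR M)%:M) ->
  let h := M / m in
  (forall p : R, p <= 1 -> p != 0 ->
     ofR (powR (Kant h p) p^-1) * (trpow A p + trpow B p)
       <= trpow (fun i => A i + B i) p /\
     trpow (fun i => A i + B i) p
       <= ofR (powR (Kant h p) (- p^-1)) * (trpow A p + trpow B p)) /\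
  (forall p : R, 1 <= p ->
     ofR (powR (Kant h p) (- p^-1)) * (trpow A p + trpow B p)
       <= trpow (fun i => A i + B i) p /\
     trpow (fun i => A i + B i) p
       <= ofR (powR (Kant h p) p^-1) * (trpow A p + trpow B p)).
Proof.
move=> m0 mM hA hB bA bB h.
have bounds p (p0 : p != 0) :=
  trpow_add_bounds m0 mM p0 (fun i => (hA i).1) (fun i => (hB i).1) bA bB.
have K1 p : p = 1 -> Kant h p = 1 by move=> ->; apply: Kant1.
split=> [p p_le1 p0 | p p_ge1].
  have [<- <-] := (kant_bound_ratios (K1 p)).1 p_le1.
  exact: bounds.
have [<- <-] := (kant_bound_ratios (K1 p)).2 p_ge1.
by apply: bounds; rewrite gt_eqF // (lt_le_trans ltr01 p_ge1).
Qed.
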